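(* Let $N$ be a normal subgroup of $F$ and let $L_N$ be the normal closure of $N$ in $F(Y_C)$. Then $L_N\trianglelefteq F(Y_C)$ and $L_N\cap F=N$.
   Context: Let $m\ge1$ and $C\ge1$ be integers. For $i=1,\dots,m$ let $Y_{C,i}=\{a_{1,i},\dots,a_{C,i}\}$, let $Y_C=\bigcup_i Y_{C,i}$ (all $a_{j,i}$ distinct), and let $F(Y_C)$ be the free group on $Y_C$. Put $A_i=a_{1,i}a_{2,i}\cdots a_{C,i}\in F(Y_C)$, $\mathcal{D}=\{A_1,\dots,A_m\}$, and let $F$ be the subgroup of $F(Y_C)$ generated by $\mathcal{D}$ (which is free with basis $\mathcal{D}$). *)

(* Free groups are not in the library: we model the free group
   F(X) on a generator type X concretely by freely reduced words. *)
From mathcomp Require Import all_boot.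
Set Implicit Arguments. Unset Strict Implicit. Unset Printing Implicit Defensive.

Section FreeGroup.
Variable X : eqType.

(* a letter is a generator x (false) or its inverse x^-1 (true) *)
Definition letter := (X * bool)%type.
Definition word := seq letter.

Definition lflip (l : letter) : letter := (l.1, ~~ l.2).

Definition reduced (w : word) : bool := sorted (fun a b => b != lflip a) w.

Definition red_step (a : letter) (acc : word) : word :=
  if acc is b :: t then (if b == lflip a then t else a :: acc) else [:: a].
Definition reduce (w : word) : word := foldr red_step [::] w.

Definition fg_one : word := [::].
Definition fg_mul (u v : word) : word := reduce (u ++ v).
Definition fg_inv (u : word) : word := rev (map lflip u).
Definition fg_conj (g n : word) : word := fg_mul (fg_inv g) (fg_mul n g).

Definition FG : word -> Prop := fun w => reduced w.

Definition is_subgroup (H : word -> Prop) : Prop :=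
  [/\ (forall w, H w -> reduced w), H fg_one,
      (forall u v, H u -> H v -> H (fg_mul u v)) &
      (forall u, H u -> H (fg_inv u))].

Definition normal_in (N G : word -> Prop) : Prop :=
  [/\ is_subgroup N, (forall w, N w -> G w) &
      (forall g n, G g -> N n -> N (fg_conj g n))].

Definition gen (S : word -> Prop) : word -> Prop := fun w =>
  exists ws : seq (bool * word),
    (forall p, p \in ws -> S p.2) /\
    w = reduce (flatten [seq (if p.1 then fg_inv p.2 else p.2) | p <- ws]).

Definition normal_closure (N : word -> Prop) : word -> Prop :=
  gen (fun x => exists g n, reduced g /\ N n /\ x = fg_conj g n).

End FreeGroup.

(* Generators a_{j,i} indexed by (j, i) : 'I_C * 'I_m (0-based). *)
Definition A_word (m C : nat) (i : 'I_m) : word ('I_C * 'I_m)%type :=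
  [seq ((j, i), false) | j <- enum 'I_C].

Arguments A_word m C i : clear implicits.

Definition Fsub (m C : nat) : word ('I_C * 'I_m)%type -> Prop :=
  gen (fun x => exists i : 'I_m, x = A_word m C i).
Arguments Fsub m C _ : clear implicits.

From mathcomp Require Import all_boot.
Set Implicit Arguments. Unset Strict Implicit. Unset Printing Implicit Defensive.

(* The map a_{1,i} |-> A_i, a_{j,i} |-> 1 (j > 1) extends to an endomorphism
   rho of F(Y_C) which fixes every A_i = a_{1,i} ... a_{C,i}, hence is a
   retraction onto F.  Since N is normal in F, rho maps every conjugate g^-1 n g
   (n in N) to rho(g)^-1 n rho(g), which lies in N; hence rho(L_N) is
   contained in N, and every w in L_N /\ F satisfies w = rho(w) in N. *)

Section FreeReduction.
Variable X : eqType.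
Implicit Types (a : letter X) (u v w g h n : word X).

Lemma lflipK : involutive (@lflip X).
Proof. by case=> x b; rewrite /lflip /= negbK. Qed.

Lemma reduce_reduced w : reduced (reduce w).
Proof.
elim: w => [|a w IH] //=; rewrite -/(reduce w) /red_step.
move: IH; case: (reduce w) => [|b t] //=.
case: eqP => [_|ne] /=; first by case: t => //= c u /andP[].
by move=> ->; rewrite andbT; apply/eqP.
Qed.

Lemma reducedE w : reduced w -> reduce w = w.
Proof.
elim: w => [|a w IH] //= red_aw.
have red_w : reduced w by case: w {IH} red_aw => //= b t /andP[].
rewrite IH // /red_step; case: w {IH red_w} red_aw => [|b t] //= /andP[ne _].
by rewrite (negbTE ne).
Qed.

Lemma reduced_pos w : all (fun a => ~~ a.2) w -> reduced w.
Proof.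
elim: w => [|a w IH] //= /andP[pos_a pos_w].
move: (IH pos_w); rewrite /reduced.
case: w {IH} pos_w => [|b t] //= /andP[pos_b _] ->; rewrite andbT.
by apply: contra pos_b => /eqP ->; rewrite /lflip /= pos_a.
Qed.

Lemma reduce_catr u v : reduce (u ++ reduce v) = reduce (u ++ v).
Proof.
have catE z : reduce (u ++ z) = foldr (@red_step X) (reduce z) u.
  by rewrite /reduce foldr_cat.
by rewrite !catE reducedE // reduce_reduced.
Qed.

Lemma red_stepK a w : reduced w -> red_step a (red_step (lflip a) w) = w.
Proof.
case: w => [|b w]; first by rewrite /red_step /= eqxx.
rewrite /red_step lflipK; case: eqP => [->|_] red_bw; last by rewrite eqxx.
by case: w red_bw => [|c w] //= /andP[ne _]; rewrite (negbTE ne).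
Qed.

Lemma reduce_catl u v : reduce (reduce u ++ v) = reduce (u ++ v).
Proof.
elim: u => [|a u IH] //=; rewrite -IH {2}/red_step.
case: (reduce u) => [|b t] //=; case: eqP => [->|] //=.
exact/esym/(red_stepK a (reduce_reduced _)).
Qed.

Lemma reduce_mid u v w : reduce (u ++ reduce v ++ w) = reduce (u ++ v ++ w).
Proof. by rewrite -reduce_catr reduce_catl reduce_catr. Qed.

Lemma reduce_cancel a u v : reduce (u ++ lflip a :: a :: v) = reduce (u ++ v).
Proof.
rewrite /reduce !foldr_cat; congr foldr.
by have := red_stepK (lflip a) (reduce_reduced v); rewrite lflipK.
Qed.

Lemma fg_inv_cat u v : fg_inv (u ++ v) = fg_inv v ++ fg_inv u.
Proof. by rewrite /fg_inv map_cat rev_cat. Qed.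

Lemma fg_invK : involutive (@fg_inv X).
Proof. by move=> u; rewrite /fg_inv map_rev revK -map_comp (eq_map lflipK) map_id. Qed.

Lemma reduce_invl_mid u v w : reduce (v ++ fg_inv u ++ u ++ w) = reduce (v ++ w).
Proof.
elim: u v w => [|a u IH] v w //=.
rewrite (fg_inv_cat [:: a]) -catA /= catA reduce_cancel -catA; exact: IH.
Qed.

Lemma reduce_invr_mid u v w : reduce (v ++ u ++ fg_inv u ++ w) = reduce (v ++ w).
Proof. by rewrite -{1}(fg_invK u) reduce_invl_mid. Qed.

Lemma reduced_inv u : reduced u -> reduced (fg_inv u).
Proof.
rewrite /reduced /fg_inv rev_sorted sorted_map.
by apply: sub_sorted => a b /=; apply: contra => /eqP ->; rewrite lflipK.
Qed.

Lemma fg_inv_reduce w : fg_inv (reduce w) = reduce (fg_inv w).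
Proof.
have red_inv : reduced (fg_inv (reduce w)) by apply/reduced_inv/reduce_reduced.
rewrite -(reducedE red_inv) -[fg_inv (reduce w)]cats0 -(reduce_invr_mid w _ [::]).
by rewrite -reduce_mid (reduce_invl_mid (reduce w) [::]) cats0.
Qed.

Lemma fg_conj_conj g h n : fg_conj g (fg_conj h n) = fg_conj (fg_mul h g) n.
Proof.
rewrite /fg_conj /fg_mul fg_inv_reduce fg_inv_cat.
rewrite (reduce_catl (fg_inv h ++ reduce (n ++ h))) reduce_catr -catA.
rewrite (catA (fg_inv g) (fg_inv h)) reduce_mid.
by rewrite [in RHS]reduce_catl reduce_catr [in RHS]catA reduce_catr -!catA.
Qed.

End FreeReduction.

Section Generation.
Variable X : eqType.
Implicit Types (u v w g : word X) (ws : seq (bool * word X)) (S H : word X -> Prop).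

Definition fg_sgn (b : bool) u := if b then fg_inv u else u.

(* [gen S w] unfolds to [exists ws, (forall p, p \in ws -> S p.2) /\ w = fg_prod ws]. *)
Definition fg_prod ws := reduce (flatten [seq fg_sgn p.1 p.2 | p <- ws]).

Lemma fg_sgnN b u : fg_sgn (~~ b) u = fg_inv (fg_sgn b u).
Proof. by case: b; rewrite /= ?fg_invK. Qed.

Lemma fg_prod_cat ws1 ws2 : fg_prod (ws1 ++ ws2) = fg_mul (fg_prod ws1) (fg_prod ws2).
Proof. by rewrite /fg_mul /fg_prod reduce_catl reduce_catr map_cat flatten_cat. Qed.

Lemma fg_prod_inv ws : fg_inv (fg_prod ws) = fg_prod (rev [seq (~~ p.1, p.2) | p <- ws]).
Proof.
rewrite /fg_prod fg_inv_reduce; congr reduce.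
elim: ws => [|p ws IH] //=.
by rewrite fg_inv_cat IH rev_cons -cats1 map_cat flatten_cat /= cats0 fg_sgnN.
Qed.

Lemma fg_prod_conj g ws : fg_conj g (fg_prod ws) = fg_prod [seq (p.1, fg_conj g p.2) | p <- ws].
Proof.
rewrite /fg_conj /fg_mul /fg_prod reduce_catr reduce_mid.
elim: ws => [|p ws IH] /=; first by have := reduce_invl_mid g [::] [::]; rewrite /= cats0.
have conj_sgn : reduce (fg_inv g ++ fg_sgn p.1 p.2 ++ g) = fg_sgn p.1 (fg_conj g p.2).
  rewrite /fg_conj /fg_mul reduce_catr; case: p.1 => //=.
  by rewrite fg_inv_reduce !fg_inv_cat fg_invK catA.
rewrite -[RHS]reduce_catr -IH reduce_catr -conj_sgn reduce_catl -!catA.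
by rewrite [in RHS](catA (fg_inv g) (fg_sgn _ _)) reduce_invr_mid -catA.
Qed.

Lemma subgroup_prod H (ys : seq (word X)) :
  is_subgroup H -> (forall y, y \in ys -> H y) -> H (reduce (flatten ys)).
Proof.
case=> _ H1 HM _; elim: ys => [|y ys IH] //= Hys.
rewrite -reduce_catr; apply: HM; first by apply: Hys; rewrite inE eqxx.
by apply: IH => z z_ys; apply: Hys; rewrite inE z_ys orbT.
Qed.

Lemma subgroup_sgn H b u : is_subgroup H -> H u -> H (fg_sgn b u).
Proof. by case: b => //= -[_ _ _ HI]; apply: HI. Qed.

Lemma gen_subgroup S : is_subgroup (gen S).
Proof.
split.
- by move=> _ [ws [_ ->]]; apply: reduce_reduced.
- by exists [::].
- move=> _ _ [ws1 [S1 ->]] [ws2 [S2 ->]]; rewrite -!/(fg_prod _) -fg_prod_cat.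
  by exists (ws1 ++ ws2); split=> // p; rewrite mem_cat => /orP[/S1|/S2].
- move=> _ [ws [Sws ->]]; rewrite -/(fg_prod ws) fg_prod_inv.
  by eexists; split=> // p; rewrite mem_rev => /mapP[q /Sws Sq ->].
Qed.

Lemma gen_min S H : is_subgroup H -> (forall x, S x -> H x) -> forall w, gen S w -> H w.
Proof.
move=> subH SH _ [ws [Sws ->]]; apply: subgroup_prod => // _ /mapP[p /Sws/SH Hp ->].
exact: (subgroup_sgn p.1 subH).
Qed.

Lemma gen_mem S x : reduced x -> S x -> gen S x.
Proof.
move=> red_x Sx; exists [:: (false, x)]; split; last by rewrite /= cats0 reducedE.
by move=> p; rewrite inE => /eqP ->.
Qed.

Lemma gen_conj S : (forall g x, reduced g -> S x -> S (fg_conj g x)) ->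
  forall g w, reduced g -> gen S w -> gen S (fg_conj g w).
Proof.
move=> conjS g _ red_g [ws [Sws ->]]; rewrite -/(fg_prod ws) fg_prod_conj.
by eexists; split=> // _ /mapP[p /Sws Sp ->]; apply: conjS.
Qed.

Lemma normal_closure_normal N : normal_in (normal_closure N) (@FG X).
Proof.
split; first exact: gen_subgroup.
  by move=> _ [ws [_ ->]]; apply: reduce_reduced.
apply: gen_conj => g _ red_g [h [n [red_h [Nn ->]]]].
by exists (fg_mul h g), n; rewrite fg_conj_conj; split=> //; apply: reduce_reduced.
Qed.

Lemma normal_closure_sub N w : reduced w -> N w -> normal_closure N w.
Proof.
move=> red_w Nw; apply: gen_mem => //; exists [::], w; split=> //; split=> //.
by rewrite /fg_conj /fg_mul /= cats0 !reducedE.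
Qed.

End Generation.

Section Homomorphism.
Variables (X Y : eqType) (f : X -> word Y).
Implicit Types (a : letter X) (u v w : word X).

Definition fg_hom w : word Y := reduce (flatten [seq fg_sgn a.2 (f a.1) | a <- w]).

Lemma fg_hom_cat u v : fg_hom (u ++ v) = fg_mul (fg_hom u) (fg_hom v).
Proof. by rewrite /fg_hom /fg_mul map_cat flatten_cat reduce_catl reduce_catr. Qed.

Lemma fg_hom_reduce w : fg_hom (reduce w) = fg_hom w.
Proof.
elim: w => [|a w IH] //=; rewrite -/(reduce w).
rewrite -[fg_hom (a :: w)]/(fg_hom ([:: a] ++ w)) fg_hom_cat -IH -fg_hom_cat /=.
rewrite /red_step; case: (reduce w) => [|b t] //; case: eqP => [->|] //=.
by rewrite /fg_hom /= fg_sgnN; exact/esym/(reduce_invr_mid _ [::]).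
Qed.

Lemma fg_hom_mul u v : fg_hom (fg_mul u v) = fg_mul (fg_hom u) (fg_hom v).
Proof. by rewrite /fg_mul fg_hom_reduce fg_hom_cat. Qed.

Lemma fg_hom_inv u : fg_hom (fg_inv u) = fg_inv (fg_hom u).
Proof.
rewrite /fg_hom fg_inv_reduce; congr reduce.
elim: u => [|a u IH] //=.
by rewrite (fg_inv_cat [:: a]) map_cat flatten_cat IH /= cats0 fg_sgnN fg_inv_cat.
Qed.

Lemma fg_hom_conj g n : fg_hom (fg_conj g n) = fg_conj (fg_hom g) (fg_hom n).
Proof. by rewrite /fg_conj !fg_hom_mul fg_hom_inv. Qed.

Lemma fg_hom_subgroup (H : word Y -> Prop) :
  is_subgroup H -> (forall x, H (f x)) -> forall w, H (fg_hom w).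
Proof.
move=> subH Hf w; apply: subgroup_prod => // _ /mapP[a _ ->].
exact: subgroup_sgn.
Qed.

Lemma subgroup_preim (H : word Y -> Prop) :
  is_subgroup H -> is_subgroup (fun w => reduced w /\ H (fg_hom w)).
Proof.
case=> _ H1 HM HI; split.
- by move=> w [].
- by [].
- by move=> u v [_ Hu] [_ Hv]; rewrite fg_hom_mul; split; [apply: reduce_reduced|apply: HM].
- by move=> u [red_u Hu]; rewrite fg_hom_inv; split; [apply: reduced_inv|apply: HI].
Qed.

End Homomorphism.

Lemma subgroup_fixed (X : eqType) (f : X -> word X) :
  is_subgroup (fun w => reduced w /\ fg_hom f w = w).
Proof.
split.
- by move=> w [].
- by [].
- move=> u v [_ fu] [_ fv].
  by rewrite fg_hom_mul fu fv; split; first apply: reduce_reduced.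
- by move=> u [red_u fu]; rewrite fg_hom_inv fu; split; first apply: reduced_inv.
Qed.

Section Retraction.
Variables (m C : nat).
Hypothesis C_gt0 : 0 < C.

Definition A_retract (x : 'I_C * 'I_m) : word ('I_C * 'I_m)%type :=
  if x.1 == 0 :> nat then A_word m C x.2 else [::].

Lemma reduced_A_word i : reduced (A_word m C i).
Proof. by apply/reduced_pos/allP => _ /mapP[j _ ->]. Qed.

Lemma A_retract_A_word i : fg_hom A_retract (A_word m C i) = A_word m C i.
Proof.
rewrite /fg_hom; pose F k := if k == 0 then A_word m C i else [::].
have -> : [seq fg_sgn a.2 (A_retract a.1) | a <- A_word m C i] = [seq F k | k <- iota 0 C].
  by rewrite /A_word -val_enum_ord -[LHS]map_comp -[RHS]map_comp.
have tail_nil n k : flatten [seq F j | j <- iota k.+1 n] = [::].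
  by elim: n k => //= n IH k; rewrite IH.
by rewrite -[in iota 0 C](prednK C_gt0) /= tail_nil cats0 reducedE ?reduced_A_word.
Qed.

Lemma A_retract_Fsub w : Fsub m C (fg_hom A_retract w).
Proof.
apply: fg_hom_subgroup; first exact: gen_subgroup.
move=> x; rewrite /A_retract; case: ifP => _; last by exists [::].
by apply: gen_mem; [apply: reduced_A_word | exists x.2].
Qed.

Lemma A_retract_id w : Fsub m C w -> fg_hom A_retract w = w.
Proof.
move=> Fw; apply: (gen_min (subgroup_fixed A_retract) _ Fw).2.
by move=> _ [i ->]; split; [apply: reduced_A_word | apply: A_retract_A_word].
Qed.

End Retraction.

Theorem lemma3p1 (m C : nat) (hm : 1 <= m) (hC : 1 <= C)
  (N : word ('I_C * 'I_m)%type -> Prop) :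
  normal_in N (Fsub m C) ->
  normal_in (normal_closure N) (@FG _) /\
  (forall w, normal_closure N w /\ Fsub m C w <-> N w).
Proof.
case=> subN NF Nconj; split; first exact: normal_closure_normal.
move=> w; split=> [[Lw Fw]|Nw]; last first.
  split; last exact: NF.
  by case: subN => red_N _ _ _; apply: normal_closure_sub (red_N w Nw) Nw.
have LN_retract : forall v, normal_closure N v ->
    reduced v /\ N (fg_hom (@A_retract m C) v).
  apply: gen_min; first exact: subgroup_preim.
  move=> _ [g [n [_ [Nn ->]]]]; split; first exact: reduce_reduced.
  rewrite fg_hom_conj (A_retract_id hC (NF n Nn)).
  by apply: Nconj => //; apply: A_retract_Fsub.
by rewrite -(A_retract_id hC Fw); case: (LN_retract w Lw).
Qed.
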